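(* For each integral geometric Apollonian super-packing there is a Euclidean motion of the plane that maps it to a strongly integral geometric Apollonian super-packing.
   Context: Circles are taken in $\hat{\mathbb C}=\mathbb R^2\cup\{\infty\}$; lines count as circles. A Descartes configuration is a set of four mutually tangent circles with disjoint interiors; an ordered, oriented one carries an ordering and a total orientation, with signed curvatures (reciprocal radius, negative when the interior is unbounded, $0$ for lines, all reversed for negative orientation). Its curvature-center coordinate matrix $M_{\mathcal D}$ is the $4\times3$ matrix with $i$-th row $(b_i,b_ix_i,b_iy_i)$, $b_i$ the signed curvature and $(x_i,y_i)$ the center of the $i$-th circle (for a line: $(0,n_x,n_y)$, $n$ the unit normal pointing into the line's interior half-plane). Let $S_i$ be the $4\times4$ matrix equal to the identity except that row $i$ has $-1$ in position $i$ and $2$ elsewhere, $S_i^\perp=S_i^T$, and $\mathcal A^S=\langle S_i,S_i^\perp\rangle$ the super-Apollonian group, acting on ordered oriented Descartes configurations by left multiplication on their augmented curvature-center coordinates. The geometric super-packing generated by $\mathcal D$ is the set of all circles of configurations in the orbit $\mathcal A^S[\mathcal D]$. It is integral if some (equivalently every) configuration in the orbit has all curvatures integers, and strongly integral if some (equivalently every) configuration in the orbit has $M_{\mathcal D}$ an integer matrix. *)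

From mathcomp Require Import all_boot all_order all_algebra.
From mathcomp Require Import reals.
Set Implicit Arguments. Unset Strict Implicit. Unset Printing Implicit Defensive.
Import Order.TTheory GRing.Theory Num.Theory.
Local Open Scope ring_scope.

Section Apollonian.
Variable R : realType.

(* Points of the extended plane  C^ = R^2 u {oo};  None = oo. *)
Definition pt := (R * R)%type.
Definition xpt := option pt.

Definition dot (p q : pt) : R := p.1 * q.1 + p.2 * q.2.
Definition d2 (p q : pt) : R := (p.1 - q.1) ^+ 2 + (p.2 - q.2) ^+ 2.

(* An oriented circle is given by its chosen interior (a generalized disk):
   - GDisk c r   : interior {p : |p-c| < r}           (bounded interior)
   - GCoDisk c r : interior {p : |p-c| > r} u {oo}     (unbounded interior)
   - GHalf n h   : interior {p : n.p > h}, n unit normal pointing into it,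
                   boundary is the line {n.p = h} together with oo. *)
Inductive gdisk :=
| GDisk of pt & R
| GCoDisk of pt & R
| GHalf of pt & R.

Definition gdisk_wf (d : gdisk) : Prop :=
  match d with
  | GDisk _ r | GCoDisk _ r => 0 < r
  | GHalf n _ => dot n n = 1
  end.

Definition interior (d : gdisk) (z : xpt) : Prop :=
  match d, z with
  | GDisk c r, Some p => d2 p c < r ^+ 2
  | GDisk _ _, None => False
  | GCoDisk c r, Some p => r ^+ 2 < d2 p c
  | GCoDisk _ _, None => True
  | GHalf n h, Some p => h < dot n p
  | GHalf _ _, None => False
  end.

Definition circle (d : gdisk) (z : xpt) : Prop :=
  match d, z with
  | GDisk c r, Some p | GCoDisk c r, Some p => d2 p c = r ^+ 2
  | GDisk _ _, None | GCoDisk _ _, None => False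
  | GHalf n h, Some p => dot n p = h
  | GHalf _ _, None => True
  end.

Definition tangent (d1 d2 : gdisk) : Prop :=
  exists z, circle d1 z /\ circle d2 z /\
    forall w, circle d1 w -> circle d2 w -> w = z.

Definition disjoint_interiors (d1 d2 : gdisk) : Prop :=
  forall z, ~ (interior d1 z /\ interior d2 z).

(* Ordered, oriented configuration: four oriented circles plus a total
   orientation (true = positive, false = negative). *)
Record config := Config { circ : 'I_4 -> gdisk ; posor : bool }.

Definition is_descartes (D : config) : Prop :=
  (forall i, gdisk_wf (circ D i)) /\
  (forall i j, i != j ->
     tangent (circ D i) (circ D j) /\
     disjoint_interiors (circ D i) (circ D j)).

(* Row (bbar, b, b x, b y) of augmented curvature-center coordinates for a
   positively oriented circle; for a line (bbar, 0, n_x, n_y) with bbar the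
   signed curvature of its image under inversion in the unit circle (= 2h). *)
Definition acc_row (d : gdisk) (k : 'I_4) : R :=
  match d with
  | GDisk c r =>
      let b := r^-1 in
      [:: b * dot c c - b^-1; b; b * c.1; b * c.2]`_k
  | GCoDisk c r =>
      let b := - r^-1 in
      [:: b * dot c c - b^-1; b; b * c.1; b * c.2]`_k
  | GHalf n h => [:: 2 * h; 0; n.1; n.2]`_k
  end.

Definition orsign (D : config) : R := if posor D then 1 else -1.

Definition acc (D : config) : 'M[R]_4 :=
  \matrix_(i < 4, k < 4) (orsign D * acc_row (circ D i) k).

Definition ccmat (D : config) : 'M[R]_(4, 3) :=
  \matrix_(i < 4, k < 3) acc D i (lift ord0 k).

Definition curv (D : config) (i : 'I_4) : R := acc D i (lift ord0 ord0).

Definition Sgen (i : 'I_4) : 'M[R]_4 :=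
  \matrix_(k < 4, l < 4)
    (if k == i then (if l == i then -1 else 2) else (k == l)%:R).

(* The super-Apollonian group A^S = <S_i, S_i^T>.  Since every generator is an
   involution, the group generated equals the monoid generated. *)
Inductive superA : 'M[R]_4 -> Prop :=
| superA1 : superA 1%:M
| superAS i g : superA g -> superA (Sgen i *m g)
| superAST i g : superA g -> superA ((Sgen i)^T *m g).

Definition in_orbit (D D' : config) : Prop :=
  is_descartes D' /\ exists g, superA g /\ acc D' = g *m acc D.

Definition super_packing (D : config) (C : xpt -> Prop) : Prop :=
  exists D', in_orbit D D' /\ exists i, C = circle (circ D' i).

Definition is_int (x : R) : Prop := exists z : int, x = z%:~R.

Definition integral_sp (D : config) : Prop :=
  exists D', in_orbit D D' /\ forall i, is_int (curv D' i).

Definition strongly_integral_sp (D : config) : Prop :=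
  exists D', in_orbit D D' /\ forall i k, is_int (ccmat D' i k).

Definition euclid_motion (f : pt -> pt) : Prop :=
  forall p q, d2 (f p) (f q) = d2 p q.

Definition xmap (f : pt -> pt) (z : xpt) : xpt := omap f z.

Definition image_set (f : pt -> pt) (C : xpt -> Prop) : xpt -> Prop :=
  fun w => exists z, C z /\ w = xmap f z.

End Apollonian.

From Pilot Require Import Defs.
From mathcomp Require Import all_boot all_order all_algebra.
From mathcomp Require Import reals.
From mathcomp Require Import zify ring lra.
From Stdlib Require Import FunctionalExtensionality PropExtensionality.
Set Implicit Arguments. Unset Strict Implicit. Unset Printing Implicit Defensive.
Import Order.TTheory GRing.Theory Num.Theory.
Local Open Scope ring_scope.

(* The curvatures [b] of an integral Descartes configuration form an integer
   vector isotropic for the Descartes form [Q_D].  A descent with the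
   super-Apollonian generators shows that every such [b] extends to an integral
   frame: integer vectors [U], [V] that are [Q_D]-orthogonal to [b] and to each
   other and have [Q_D]-norm 2.  By the augmented Euclidean Descartes theorem
   [W^T Q_D W = Q_W], the columns of the augmented matrix [W] of the
   configuration form a basis in which [U] and [V] expand, and the coefficients
   of these expansions are the linear part and the translation of a Euclidean
   motion that turns the centre columns [(b x, b y)] into [U] and [V].  A motion
   acts on [W] from the right, so it commutes with the super-Apollonian group
   acting from the left and carries the whole super-packing onto that of the
   moved, strongly integral, configuration. *)

(** * Integral frames of isotropic vectors *)

Record ivec := IVec { iv0 : int; iv1 : int; iv2 : int; iv3 : int }.

Definition isum u := iv0 u + iv1 u + iv2 u + iv3 u.
Definition idot u v := iv0 u * iv0 v + iv1 u * iv1 v + iv2 u * iv2 v + iv3 u * iv3 v.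

(* Twice the Descartes form [Q_D = I - 1 1^T / 2], kept integral. *)
Definition qform u v := 2 * idot u v - isum u * isum v.

(* [U] and [V] are the integer candidates for the centre columns [(b_i x_i)]
   and [(b_i y_i)] of a configuration with curvature column [b]. *)
Definition has_frame b := exists U V,
  [/\ qform b U = 0, qform b V = 0, qform U U = 4, qform V V = 4 & qform U V = 0].

Definition qform_isometry (S : ivec -> ivec) := forall u v, qform (S u) (S v) = qform u v.

Lemma has_frame_isometry S S' : qform_isometry S -> cancel S' S ->
  forall b, has_frame (S b) -> has_frame b.
Proof.
move=> hS hS' b [U [V [hU hV hUU hVV hUV]]].
have iso' x y : qform (S' x) (S' y) = qform x y by rewrite -hS !hS'.
have shift x : qform b (S' x) = qform (S b) x by rewrite -hS hS'.
by exists (S' U), (S' V); rewrite !shift !iso'.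
Qed.

(* The actions of [S_0] and [S_0^T] on a column of curvatures. *)
Definition refl0 u := IVec (2 * (iv1 u + iv2 u + iv3 u) - iv0 u) (iv1 u) (iv2 u) (iv3 u).
Definition refl0T u :=
  IVec (- iv0 u) (iv1 u + 2 * iv0 u) (iv2 u + 2 * iv0 u) (iv3 u + 2 * iv0 u).
Definition rotv u := IVec (iv1 u) (iv2 u) (iv3 u) (iv0 u).
Definition rotvV u := IVec (iv3 u) (iv0 u) (iv1 u) (iv2 u).
Definition oppv u := IVec (- iv0 u) (- iv1 u) (- iv2 u) (- iv3 u).

Ltac ivec_ring := repeat case=> ? ? ? ?; rewrite /qform /idot /isum /=; ring.

Lemma qform_refl0 : qform_isometry refl0. Proof. by ivec_ring. Qed.
Lemma qform_refl0T : qform_isometry refl0T. Proof. by ivec_ring. Qed.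
Lemma qform_rotv : qform_isometry rotv. Proof. by ivec_ring. Qed.
Lemma qform_oppv : qform_isometry oppv. Proof. by ivec_ring. Qed.

Lemma refl0K : involutive refl0.
Proof. by case=> ? ? ? ?; congr IVec => /=; ring. Qed.
Lemma refl0TK : involutive refl0T.
Proof. by case=> ? ? ? ?; congr IVec => /=; ring. Qed.
Lemma oppvK : involutive oppv.
Proof. by case=> ? ? ? ?; congr IVec => /=; ring. Qed.
Lemma rotvVK : cancel rotvV rotv. Proof. by case. Qed.

Definition paired b :=
  iv0 b = iv1 b /\ iv2 b = iv3 b \/ iv0 b = iv2 b /\ iv1 b = iv3 b \/
  iv0 b = iv3 b /\ iv1 b = iv2 b.

Lemma has_frame_paired b : paired b -> has_frame b.
Proof.
case: b => a0 a1 a2 a3; rewrite /paired /has_frame /qform /idot /isum /=.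
case=> [[-> ->]|[[-> ->]|[-> ->]]].
- by exists (IVec 1 (-1) 0 0), (IVec 0 0 1 (-1)); split => /=; lia.
- by exists (IVec 1 0 (-1) 0), (IVec 0 1 0 (-1)); split => /=; lia.
- by exists (IVec 1 0 0 (-1)), (IVec 0 1 (-1) 0); split => /=; lia.
Qed.

Lemma qform_isotropic b :
  qform b b = 0 <-> 2 * (iv0 b ^+ 2 + iv1 b ^+ 2 + iv2 b ^+ 2 + iv3 b ^+ 2) = isum b ^+ 2.
Proof. by rewrite /qform /idot !expr2; split=> h; lia. Qed.

Lemma isotropic_coord_lt_sum (s x y z w : int) : 0 < s ->
  2 * (x ^+ 2 + y ^+ 2 + z ^+ 2 + w ^+ 2) = s ^+ 2 -> x < s.
Proof. move=> hs; rewrite !expr2 => h; nia. Qed.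

Lemma isotropic_neg_coord_bound (x y z w : int) : 0 < x + y + z + w ->
  2 * (x ^+ 2 + y ^+ 2 + z ^+ 2 + w ^+ 2) = (x + y + z + w) ^+ 2 -> x < 0 ->
  - 2 * x < x + y + z + w.
Proof.
move=> hs; rewrite !expr2 => h hx.
have : 0 <= (y - z) ^+ 2 + (z - w) ^+ 2 + (y - w) ^+ 2 by rewrite !addr_ge0 ?sqr_ge0.
rewrite !expr2; nia.
Qed.

Definition balanced_coord (s x : int) := (0 <= x) && (2 * x <= s).

Lemma has_frame_descent0 b : 0 < isum b -> qform b b = 0 ->
  ~~ balanced_coord (isum b) (iv0 b) ->
  exists2 b', `|isum b'| < isum b & qform b' b' = 0 /\ (has_frame b' -> has_frame b).
Proof.
case: b => x y z w hs hb; have hb' := proj1 (qform_isotropic _) hb.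
move: hs hb'; rewrite /balanced_coord /isum /= => hs hb'.
rewrite negb_and -!ltNge => /orP[hx|hx].
- exists (refl0T (IVec x y z w)); last first.
    split; first by rewrite qform_refl0T.
    exact: has_frame_isometry qform_refl0T refl0TK _.
  have := isotropic_neg_coord_bound hs hb' hx; rewrite /isum /=; lia.
- exists (refl0 (IVec x y z w)); last first.
    split; first by rewrite qform_refl0.
    exact: has_frame_isometry qform_refl0 refl0K _.
  have := isotropic_coord_lt_sum hs hb'; rewrite /isum /=; lia.
Qed.

Lemma zero_or_half_paired (x y z w : int) (s := x + y + z + w) : 0 < s ->
  x = 0 \/ 2 * x = s -> y = 0 \/ 2 * y = s -> z = 0 \/ 2 * z = s -> w = 0 \/ 2 * w = s ->
  paired (IVec x y z w).
Proof. by rewrite /s /paired /= => hs; case=> ?; case=> ?; case=> ?; case=> ?; lia. Qed.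

(* Each [t (s - 2 t)] is nonnegative, and their sum is [s^2 - 2 |b|^2 = 0]. *)
Lemma isotropic_balanced_paired b : 0 < isum b -> qform b b = 0 ->
  all (balanced_coord (isum b)) [:: iv0 b; iv1 b; iv2 b; iv3 b] -> paired b.
Proof.
case: b => x y z w; rewrite qform_isotropic /balanced_coord /isum /=.
set s := x + y + z + w => hs hb /and5P[/andP[x0 x1] /andP[y0 y1] /andP[z0 z1] /andP[w0 w1] _].
have ge0 t : 0 <= t -> 2 * t <= s -> 0 <= t * (s - 2 * t).
  by move=> t0 t1; rewrite mulr_ge0 // subr_ge0.
have vanish t : t * (s - 2 * t) == 0 -> t = 0 \/ 2 * t = s.
  by rewrite mulf_eq0 subr_eq0 => /orP[] /eqP; [left | right].
have /eqP : x * (s - 2 * x) + y * (s - 2 * y) + z * (s - 2 * z) + w * (s - 2 * w) = 0.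
  by move: hb; rewrite !expr2 /s; lia.
rewrite !paddr_eq0 ?addr_ge0 ?ge0 //.
case/andP=> /andP[/andP[/vanish hx /vanish hy] /vanish hz] /vanish hw.
exact: zero_or_half_paired.
Qed.

Lemma isotropic_sum0 b : qform b b = 0 -> isum b = 0 -> paired b.
Proof.
move=> /qform_isotropic + s0; rewrite s0 expr0n /=; case: b {s0} => x y z w /=.
move/eqP; rewrite mulf_eq0 /= !paddr_eq0 ?addr_ge0 ?sqr_ge0 // !sqrf_eq0.
by case/andP=> /andP[/andP[/eqP-> /eqP->] /eqP->] /eqP->; left.
Qed.

Lemma isum_rotv b : isum (rotv b) = isum b.
Proof. by rewrite /isum /=; ring. Qed.

(* If some coordinate of [b] lies outside [0, s/2], rotate it to position 0
   and apply [S_0] or [S_0^T], which decreases [|s|]. *)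
Lemma has_frame_pos b : 0 < isum b -> qform b b = 0 ->
  (forall b', `|isum b'| < isum b -> qform b' b' = 0 -> has_frame b') -> has_frame b.
Proof.
move=> hs hb IH.
have descend c : isum c = isum b -> qform c c = 0 ->
    ~~ balanced_coord (isum c) (iv0 c) -> has_frame c.
  move=> ec hc hu; rewrite -ec in hs IH.
  by have [b' lt [hb' back]] := has_frame_descent0 hs hc hu; exact/back/IH.
have rot c : has_frame (rotv c) -> has_frame c by exact: has_frame_isometry qform_rotv rotvVK _.
have [b0|] := boolP (balanced_coord (isum b) (iv0 b)); last exact: descend.
have [b1|u1] := boolP (balanced_coord (isum b) (iv1 b)).
  have [b2|u2] := boolP (balanced_coord (isum b) (iv2 b)).
    have [b3|u3] := boolP (balanced_coord (isum b) (iv3 b)).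
      by apply/has_frame_paired/isotropic_balanced_paired; rewrite //= b0 b1 b2 b3.
    by apply/rot/rot/rot/descend; rewrite ?isum_rotv ?qform_rotv.
  by apply/rot/rot/descend; rewrite ?isum_rotv ?qform_rotv.
by apply/rot/descend; rewrite ?isum_rotv ?qform_rotv.
Qed.

Lemma has_frame_isotropic b : qform b b = 0 -> has_frame b.
Proof.
have [n le_sn] : exists n : nat, `|isum b| <= n%:Z by exists `|isum b|%N; lia.
elim: n b le_sn => [|n IH] b le_sn hb.
  by apply/has_frame_paired/isotropic_sum0 => //; lia.
have pos c : 0 < isum c -> `|isum c| <= n.+1%:Z -> qform c c = 0 -> has_frame c.
  by move=> hc le_c qc; apply: has_frame_pos => // c' lt_c' qc'; apply: IH => //; lia.
case: (ltrgtP (isum b) 0) => hs.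
- have ho : isum (oppv b) = - isum b by rewrite /isum /=; ring.
  apply: (has_frame_isometry qform_oppv oppvK); apply: pos; rewrite ?ho ?qform_oppv //; lia.
- exact: pos.
- by apply: IH => //; lia.
Qed.

(** * Tangency in the plane *)

Section PlaneGeometry.
Variable R : realType.
Implicit Types (p c n : pt R) (r h : R).

Lemma cauchy_schwarz2 (u1 u2 v1 v2 : R) :
  (u1 * v1 + u2 * v2) ^+ 2 <= (u1 ^+ 2 + u2 ^+ 2) * (v1 ^+ 2 + v2 ^+ 2).
Proof.
rewrite -subr_ge0 (_ : _ - _ = (u1 * v2 - u2 * v1) ^+ 2) ?sqr_ge0 //; ring.
Qed.

Lemma sqr_le_bounds (x m : R) : 0 <= m -> x ^+ 2 <= m ^+ 2 -> - m <= x <= m.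
Proof.
by move=> m_ge0 h; rewrite -ler_norml -ler_sqr ?nnegrE ?normr_ge0 // real_normK ?num_real.
Qed.

Lemma d2_centers_bounds c1 c2 p r1 r2 : 0 < r1 -> 0 < r2 ->
  d2 p c1 = r1 ^+ 2 -> d2 p c2 = r2 ^+ 2 ->
  (r1 - r2) ^+ 2 <= d2 c1 c2 <= (r1 + r2) ^+ 2.
Proof.
move=> r1_gt0 r2_gt0; rewrite /d2 => e1 e2.
set u1 := p.1 - c1.1; set u2 := p.2 - c1.2; set v1 := p.1 - c2.1; set v2 := p.2 - c2.2.
have -> : (c1.1 - c2.1) ^+ 2 + (c1.2 - c2.2) ^+ 2 =
    (u1 ^+ 2 + u2 ^+ 2) + (v1 ^+ 2 + v2 ^+ 2) - 2 * (u1 * v1 + u2 * v2).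
  by rewrite /u1 /u2 /v1 /v2; ring.
have := cauchy_schwarz2 u1 u2 v1 v2; rewrite e1 e2 -exprMn => cs.
have /andP[lo hi] : - (r1 * r2) <= u1 * v1 + u2 * v2 <= r1 * r2.
  by apply: sqr_le_bounds cs; rewrite mulr_ge0 ?ltW.
by apply/andP; split; nra.
Qed.

Lemma disks_overlap c1 c2 r1 r2 : 0 < r1 -> 0 < r2 -> d2 c1 c2 < (r1 + r2) ^+ 2 ->
  exists z, d2 z c1 < r1 ^+ 2 /\ d2 z c2 < r2 ^+ 2.
Proof.
move=> r1_gt0 r2_gt0 hD.
have s_gt0 : 0 < r1 + r2 by apply: addr_gt0.
set l := r1 / (r1 + r2).
have l_gt0 : 0 < l by rewrite divr_gt0.
have l_lt1 : l < 1 by rewrite ltr_pdivrMr // mul1r ltrDl.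
have hl1 : l * (r1 + r2) = r1 by rewrite /l mulfVK // gt_eqF.
have hl2 : (1 - l) * (r1 + r2) = r2 by rewrite mulrBl mul1r hl1; ring.
clearbody l.
exists (c1.1 + l * (c2.1 - c1.1), c1.2 + l * (c2.2 - c1.2)); rewrite /d2 /=; split.
  have -> : (c1.1 + l * (c2.1 - c1.1) - c1.1) ^+ 2 + (c1.2 + l * (c2.2 - c1.2) - c1.2) ^+ 2
     = l ^+ 2 * d2 c1 c2 by rewrite /d2; ring.
  by rewrite -hl1 exprMn ltr_pM2l // exprn_gt0.
have -> : (c1.1 + l * (c2.1 - c1.1) - c2.1) ^+ 2 + (c1.2 + l * (c2.2 - c1.2) - c2.2) ^+ 2
    = (1 - l) ^+ 2 * d2 c1 c2 by rewrite /d2; ring.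
by rewrite -hl2 exprMn ltr_pM2l // exprn_gt0 // subr_gt0.
Qed.

Lemma disk_codisk_overlap c1 c2 r1 r2 : 0 < r1 -> 0 < r2 -> (r1 - r2) ^+ 2 < d2 c1 c2 ->
  exists z, d2 z c1 < r1 ^+ 2 /\ r2 ^+ 2 < d2 z c2.
Proof.
move=> r1_gt0 r2_gt0 hD.
have D_gt0 : 0 < d2 c1 c2 by apply: le_lt_trans hD; apply: sqr_ge0.
set d := Num.sqrt (d2 c1 c2).
have d_gt0 : 0 < d by rewrite sqrtr_gt0.
have dd : d ^+ 2 = d2 c1 c2 by rewrite sqr_sqrtr // ltW.
have lt_d : r2 - r1 < d by rewrite ltNge; apply/negP => hle; move: hD; rewrite -dd; nra.
set M := Num.max 0 (r2 - d).
have [M_ge0 M_ge] : 0 <= M /\ r2 - d <= M by rewrite !le_max !lexx orbT.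
have M_lt : M < r1 by rewrite gt_max r1_gt0 /=; lra.
set s := (M + r1) / 2.
have [s_gt0 s_lt_r1 r2_lt] : [/\ 0 < s, s < r1 & r2 < d + s] by rewrite /s; split; lra.
set m := s / d.
have md : m * d = s by rewrite /m mulfVK // gt_eqF.
exists (c1.1 + m * (c1.1 - c2.1), c1.2 + m * (c1.2 - c2.2)); rewrite /d2 /=; split.
  have -> : (c1.1 + m * (c1.1 - c2.1) - c1.1) ^+ 2 + (c1.2 + m * (c1.2 - c2.2) - c1.2) ^+ 2
     = (m * d) ^+ 2 by rewrite exprMn dd /d2; ring.
  by rewrite md; nra.
have -> : (c1.1 + m * (c1.1 - c2.1) - c2.1) ^+ 2 + (c1.2 + m * (c1.2 - c2.2) - c2.2) ^+ 2
     = (d + m * d) ^+ 2.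
  by rewrite (_ : (d + m * d) ^+ 2 = (1 + m) ^+ 2 * d ^+ 2); [rewrite dd /d2; ring | ring].
by rewrite md; nra.
Qed.

Lemma disk_disk_tangent c1 r1 c2 r2 p : 0 < r1 -> 0 < r2 ->
  d2 p c1 = r1 ^+ 2 -> d2 p c2 = r2 ^+ 2 ->
  disjoint_interiors (GDisk c1 r1) (GDisk c2 r2) -> d2 c1 c2 = (r1 + r2) ^+ 2.
Proof.
move=> r1_gt0 r2_gt0 e1 e2 hdis.
have /andP[_ hi] := d2_centers_bounds r1_gt0 r2_gt0 e1 e2.
apply/eqP; rewrite eq_le hi leNgt /=.
by apply/negP => /(disks_overlap r1_gt0 r2_gt0)[z hz]; apply: (hdis (Some z)).
Qed.

Lemma disk_codisk_tangent c1 r1 c2 r2 p : 0 < r1 -> 0 < r2 ->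
  d2 p c1 = r1 ^+ 2 -> d2 p c2 = r2 ^+ 2 ->
  disjoint_interiors (GDisk c1 r1) (GCoDisk c2 r2) -> d2 c1 c2 = (r1 - r2) ^+ 2.
Proof.
move=> r1_gt0 r2_gt0 e1 e2 hdis.
have /andP[lo _] := d2_centers_bounds r1_gt0 r2_gt0 e1 e2.
apply/eqP; rewrite eq_le lo andbT leNgt.
by apply/negP => /(disk_codisk_overlap r1_gt0 r2_gt0)[z hz]; apply: (hdis (Some z)).
Qed.

Lemma disk_half_tangent c r n h p : 0 < r -> dot n n = 1 ->
  d2 p c = r ^+ 2 -> dot n p = h ->
  disjoint_interiors (GDisk c r) (GHalf n h) -> h - dot n c = r.
Proof.
rewrite /dot /d2 => r_gt0 hn hp hh hdis.
set e := h - (n.1 * c.1 + n.2 * c.2).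
have /andP[e_ge e_le] : - r <= e <= r.
  apply: sqr_le_bounds; first exact: ltW.
  have -> : e = n.1 * (p.1 - c.1) + n.2 * (p.2 - c.2) by rewrite /e -hh; ring.
  by rewrite -hp -[X in _ <= X]mul1r -hn -!expr2; apply: cauchy_schwarz2.
apply/eqP; rewrite -/e eq_le e_le leNgt /=; apply/negP => lt_er.
set l := (r + e) / 2.
apply: (hdis (Some (c.1 + l * n.1, c.2 + l * n.2))); rewrite /= /d2 /dot /=; split.
  have -> : (c.1 + l * n.1 - c.1) ^+ 2 + (c.2 + l * n.2 - c.2) ^+ 2 =
    l ^+ 2 * (n.1 * n.1 + n.2 * n.2) by ring.
  by rewrite hn mulr1 /l; nra.
have -> : n.1 * (c.1 + l * n.1) + n.2 * (c.2 + l * n.2) =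
  (n.1 * c.1 + n.2 * c.2) + l * (n.1 * n.1 + n.2 * n.2) by ring.
by rewrite hn mulr1 /l; move: lt_er; rewrite /e; lra.
Qed.

Lemma codisk_half_overlap c r n h : 0 < r -> dot n n = 1 ->
  ~ disjoint_interiors (GCoDisk c r) (GHalf n h).
Proof.
rewrite /dot => r_gt0 hn hdis.
set l := `|h - (n.1 * c.1 + n.2 * c.2)| + r + 1.
have := ler_norm (h - (n.1 * c.1 + n.2 * c.2)); have := normr_ge0 (h - (n.1 * c.1 + n.2 * c.2)).
rewrite -/l => l_ge l_ge'.
apply: (hdis (Some (c.1 + l * n.1, c.2 + l * n.2))); rewrite /= /d2 /dot /=; split.
  have -> : (c.1 + l * n.1 - c.1) ^+ 2 + (c.2 + l * n.2 - c.2) ^+ 2 =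
    l ^+ 2 * (n.1 * n.1 + n.2 * n.2) by ring.
  by rewrite hn mulr1 /l; nra.
have -> : n.1 * (c.1 + l * n.1) + n.2 * (c.2 + l * n.2) =
  (n.1 * c.1 + n.2 * c.2) + l * (n.1 * n.1 + n.2 * n.2) by ring.
by rewrite hn mulr1 /l; lra.
Qed.

Lemma halfplanes_tangent n1 h1 n2 h2 : dot n1 n1 = 1 -> dot n2 n2 = 1 ->
  disjoint_interiors (GHalf n1 h1) (GHalf n2 h2) -> dot n1 n2 = -1.
Proof.
rewrite /dot => e1 e2 hdis.
set k := n1.1 * n2.1 + n1.2 * n2.2.
have /andP[k_ge _] : -1 <= k <= 1.
  by apply: sqr_le_bounds => //; rewrite expr1n -(mulr1 1) -{1}e1 -e2 -!expr2 cauchy_schwarz2.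
apply/eqP; rewrite eq_le k_ge andbT leNgt; apply/negP => lt_k.
set M := `|h1| + `|h2| + 1.
set l := M / (1 + k).
have hl : l * (1 + k) = M by rewrite /l mulfVK // gt_eqF //; lra.
apply: (hdis (Some (l * (n1.1 + n2.1), l * (n1.2 + n2.2)))); rewrite /= /dot /=.
have -> : n1.1 * (l * (n1.1 + n2.1)) + n1.2 * (l * (n1.2 + n2.2)) =
  l * ((n1.1 * n1.1 + n1.2 * n1.2) + k) by rewrite /k; ring.
have -> : n2.1 * (l * (n1.1 + n2.1)) + n2.2 * (l * (n1.2 + n2.2)) =
  l * ((n2.1 * n2.1 + n2.2 * n2.2) + k) by rewrite /k; ring.
rewrite e1 e2 hl /M.
have := ler_norm h1; have := ler_norm h2; have := normr_ge0 h1; have := normr_ge0 h2; lra.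
Qed.
End PlaneGeometry.

(** * The augmented Euclidean Descartes theorem *)

Definition i0 : 'I_4 := @Ordinal 4 0 isT.
Definition i1 : 'I_4 := @Ordinal 4 1 isT.
Definition i2 : 'I_4 := @Ordinal 4 2 isT.
Definition i3 : 'I_4 := @Ordinal 4 3 isT.

Lemma ord4P (i : 'I_4) : [\/ i = i0, i = i1, i = i2 | i = i3].
Proof.
by case: i => [[|[|[|[|m]]]] hm] //; [constructor 1|constructor 2|constructor 3|constructor 4];
  apply: val_inj.
Qed.

Lemma sum4 (V : nmodType) (F : 'I_4 -> V) : \sum_(k < 4) F k = F i0 + F i1 + F i2 + F i3.
Proof.
rewrite !big_ord_recr big_ord0 /= add0r.
by congr (_ + _ + _ + _); congr F; apply: val_inj.
Qed.

Ltac ord4_cases i := case: (ord4P i) => ->.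

Section GramDuality.
Variables (F : comRingType) (n : nat).
Implicit Types A Ai B Bi M W : 'M[F]_n.

Lemma gram_right_inverse Ai B Bi W : B *m Bi = 1%:M ->
  W *m Ai *m W^T = B -> W *m (Ai *m W^T *m Bi) = 1%:M.
Proof. by move=> BBi gram; rewrite !mulmxA gram. Qed.

Lemma gram_dual A Ai B Bi W : A *m Ai = 1%:M -> B *m Bi = 1%:M ->
  W *m Ai *m W^T = B -> W^T *m Bi *m W = A.
Proof.
move=> AAi BBi gram; have /mulmx1C inv := gram_right_inverse BBi gram.
by rewrite -[RHS]mulmx1 -inv !mulmxA AAi mul1mx.
Qed.

Definition mxform (M : 'M[F]_n) (u v : 'I_n -> F) := \sum_k \sum_l u k * M k l * v l.

Lemma mxform_mulmx M W i j :
  (W *m M *m W^T) i j = mxform M (W i) (W j).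
Proof.
rewrite /mxform !mxE [RHS]exchange_big.
by apply: eq_bigr => l _; rewrite !mxE mulr_suml.
Qed.

Lemma mxform_trmx_mulmx M W k l :
  (W^T *m M *m W) k l = mxform M (W^~ k) (W^~ l).
Proof.
rewrite -[X in _ *m X]trmxK mxform_mulmx.
by apply: eq_bigr => ? _; apply: eq_bigr => ? _; rewrite !mxE.
Qed.
End GramDuality.

Section AugmentedDescartes.
Variable R : realType.

Definition mx4 (rows : seq (seq R)) : 'M[R]_4 := \matrix_(i, j) nth 0 (nth [::] rows i) j.

Definition QD : 'M[R]_4 := \matrix_(i, j) ((i == j)%:R - 2^-1).
Definition QW : 'M[R]_4 :=
  mx4 [:: [:: 0; -4; 0; 0]; [:: -4; 0; 0; 0]; [:: 0; 0; 2; 0]; [:: 0; 0; 0; 2]].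
Definition QWinv : 'M[R]_4 :=
  mx4 [:: [:: 0; - 4^-1; 0; 0]; [:: - 4^-1; 0; 0; 0]; [:: 0; 0; 2^-1; 0]; [:: 0; 0; 0; 2^-1]].

Definition qD := mxform QD.
Definition qW := mxform QWinv.

Lemma QD_invol : QD *m QD = 1%:M.
Proof.
by apply/matrixP => i j; rewrite !mxE sum4 !mxE; ord4_cases i; ord4_cases j; rewrite /=; field.
Qed.

Lemma QW_QWinv : QW *m QWinv = 1%:M.
Proof.
by apply/matrixP => i j; rewrite !mxE sum4 !mxE; ord4_cases i; ord4_cases j; rewrite /=; field.
Qed.

Lemma qDE u v : qD u v = u i0 * v i0 + u i1 * v i1 + u i2 * v i2 + u i3 * v i3
  - (u i0 + u i1 + u i2 + u i3) * (v i0 + v i1 + v i2 + v i3) / 2.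
Proof. by rewrite /qD /mxform !sum4 !mxE /=; field. Qed.

Lemma qWE u v : qW u v = (u i2 * v i2 + u i3 * v i3) / 2 - (u i0 * v i1 + u i1 * v i0) / 4.
Proof. by rewrite /qW /mxform !sum4 !mxE /=; field. Qed.

Lemma qDC u v : qD u v = qD v u. Proof. by rewrite !qDE; ring. Qed.
Lemma qWC u v : qW u v = qW v u. Proof. by rewrite !qWE; ring. Qed.

Lemma qW_acc_row_self d : gdisk_wf d -> qW (acc_row d) (acc_row d) = 2^-1.
Proof.
rewrite qWE; case: d => [c r|c r|n h] /= wf; rewrite /dot.
- by field; rewrite gt_eqF.
- by rewrite invrN; field; rewrite gt_eqF.
- by move: wf; rewrite /dot => ->; field.
Qed.

Definition gdisk_kind (d : gdisk R) : nat :=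
  match d with GDisk _ _ => 0 | GCoDisk _ _ => 1 | GHalf _ _ => 2 end.

Lemma qW_acc_row_tangent d1 d2 z : gdisk_wf d1 -> gdisk_wf d2 ->
  circle d1 z -> circle d2 z -> disjoint_interiors d1 d2 ->
  qW (acc_row d1) (acc_row d2) = - 2^-1.
Proof.
wlog le12 : d1 d2 / (gdisk_kind d1 <= gdisk_kind d2)%N => [hwlog|].
  move=> w1 w2 z1 z2 hdis; case: (leqP (gdisk_kind d1) (gdisk_kind d2)) => [le|/ltnW le].
    exact: hwlog z1 z2 hdis.
  by rewrite qWC; apply: hwlog z2 z1 _ => // z' [? ?]; apply: (hdis z').
case: d1 le12 => [c1 r1|c1 r1|n1 h1]; case: d2 => [c2 r2|c2 r2|n2 h2] //= _ w1 w2 z1 z2 hdis;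
  rewrite qWE /= ?invrN.
- case: z z1 z2 => [p|] //= z1 z2.
  have hD := disk_disk_tangent w1 w2 z1 z2 hdis.
  transitivity ((r1 ^+ 2 + r2 ^+ 2 - d2 c1 c2) / (4 * r1 * r2)).
    by rewrite /d2 /dot; field; rewrite !gt_eqF.
  by rewrite hD; field; rewrite !gt_eqF.
- case: z z1 z2 => [p|] //= z1 z2.
  have hD := disk_codisk_tangent w1 w2 z1 z2 hdis.
  transitivity ((r1 ^+ 2 + r2 ^+ 2 - d2 c1 c2) / (- 4 * r1 * r2)).
    by rewrite /d2 /dot; field; rewrite !gt_eqF.
  by rewrite hD; field; rewrite !gt_eqF.
- case: z z1 z2 => [p|] //= z1 z2.
  have he := disk_half_tangent w1 w2 z1 z2 hdis.
  rewrite -he; move: he; rewrite /dot => he.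
  by field; rewrite he gt_eqF.
- by case: (hdis None).
- by case: (codisk_half_overlap w1 w2 hdis).
- by move: (halfplanes_tangent w1 w2 hdis); rewrite /dot => ->; field.
Qed.

Lemma qW_acc_rows D i j :
  qW (acc D i) (acc D j) = qW (acc_row (circ D i)) (acc_row (circ D j)).
Proof. by rewrite !qWE !mxE /orsign; case: (posor D) => /=; ring. Qed.

Lemma acc_rows_gram D : is_descartes D -> acc D *m QWinv *m (acc D)^T = QD.
Proof.
case=> wf tan; apply/matrixP => i j; rewrite mxform_mulmx -/qW qW_acc_rows mxE.
have [<-|ne] := eqVneq i j; rewrite /=; first by rewrite qW_acc_row_self //; field.
have [[z [zi [zj _]]] dis] := tan i j ne.
by rewrite (qW_acc_row_tangent _ _ zi zj dis) // sub0r.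
Qed.

Theorem augmented_descartes D : is_descartes D -> (acc D)^T *m QD *m acc D = QW.
Proof. by move=> hD; apply: gram_dual QW_QWinv QD_invol (acc_rows_gram hD). Qed.

Lemma qD_acc_cols D k l : is_descartes D -> qD ((acc D)^~ k) ((acc D)^~ l) = QW k l.
Proof. by move=> hD; rewrite /qD -mxform_trmx_mulmx augmented_descartes. Qed.

Lemma acc_col_expansion D (P : 'I_4 -> R) : is_descartes D -> forall i,
  P i = - qD ((acc D)^~ i1) P / 4 * acc D i i0 - qD ((acc D)^~ i0) P / 4 * acc D i i1
      + qD ((acc D)^~ i2) P / 2 * acc D i i2 + qD ((acc D)^~ i3) P / 2 * acc D i i3.
Proof.
move=> hD i; move: (gram_right_inverse QD_invol (acc_rows_gram hD)).
move: (acc D) => W inv; pose Pc : 'cV_4 := \col_j P j.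
have -> : P i = (W *m (QWinv *m W^T *m QD *m Pc)) i 0 by rewrite mulmxA inv mul1mx mxE.
by do 6 (rewrite ?sum4 ?mxE); rewrite !qDE /=; field.
Qed.
End AugmentedDescartes.

(** * Euclidean motions *)

Section Motions.
Variable R : realType.
Implicit Types (p q c n : pt R) (d : gdisk R) (D E : config R).

Record motion := Motion { ma : R; mb : R; mc : R; md : R; mt1 : R; mt2 : R }.

Definition mlin (m : motion) p : pt R := (ma m * p.1 + mb m * p.2, mc m * p.1 + md m * p.2).
Definition mtrans (m : motion) : pt R := (mt1 m, mt2 m).
Definition mapp (m : motion) p : pt R := ((mlin m p).1 + mt1 m, (mlin m p).2 + mt2 m).

Definition orthogonal (m : motion) :=
  [/\ ma m * ma m + mb m * mb m = 1, mc m * mc m + md m * md m = 1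
    & ma m * mc m + mb m * md m = 0].

Definition minv (m : motion) : motion :=
  Motion (ma m) (mc m) (mb m) (md m)
    (- (ma m * mt1 m + mc m * mt2 m)) (- (mb m * mt1 m + md m * mt2 m)).

(* Orthonormal rows force [(c, d) = k (-b, a)] with [k = ad - bc] and [k^2 = 1]. *)
Lemma orthonormal_rows_cols (a b c d : R) :
  a * a + b * b = 1 -> c * c + d * d = 1 -> a * c + b * d = 0 ->
  [/\ a * a + c * c = 1, b * b + d * d = 1 & a * b + c * d = 0].
Proof.
move=> h1 h2 h3; set k := a * d - b * c.
have hk : k * k = 1.
  transitivity ((a * a + b * b) * (c * c + d * d) - (a * c + b * d) ^+ 2).
    by rewrite /k; ring.
  by rewrite h1 h2 h3; ring.
have hc : c = - k * b.
  transitivity (c * (a * a + b * b) - a * (a * c + b * d)); first by rewrite h1 h3; ring.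
  by rewrite /k; ring.
have hd : d = k * a.
  transitivity (d * (a * a + b * b) - b * (a * c + b * d)); first by rewrite h1 h3; ring.
  by rewrite /k; ring.
clearbody k; rewrite hc hd; split.
- by transitivity (a * a + (k * k) * (b * b)); [ring | rewrite hk mul1r h1].
- by transitivity ((k * k) * (a * a) + b * b); [ring | rewrite hk mul1r h1].
- by transitivity ((1 - k * k) * (a * b)); [ring | rewrite hk subrr mul0r].
Qed.

Lemma orthogonal_cols m : orthogonal m ->
  [/\ ma m * ma m + mc m * mc m = 1, mb m * mb m + md m * md m = 1
    & ma m * mb m + mc m * md m = 0].
Proof. by case=> h1 h2 h3; apply: orthonormal_rows_cols. Qed.

Lemma orthogonal_minv m : orthogonal m -> orthogonal (minv m).
Proof. by case/orthogonal_cols. Qed.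

Lemma minvK m : orthogonal m -> minv (minv m) = m.
Proof.
case: m => a b c d t1 t2 [/= h1 h2 h3]; rewrite /minv /=; congr Motion.
- by transitivity ((a * a + b * b) * t1 + (a * c + b * d) * t2); [ring | rewrite h1 h3; ring].
- by transitivity ((a * c + b * d) * t1 + (c * c + d * d) * t2); [ring | rewrite h2 h3; ring].
Qed.

Lemma mlinK m : orthogonal m -> cancel (mlin m) (mlin (minv m)).
Proof.
case/orthogonal_cols; case: m => a b c d t1 t2 /= h4 h5 h6 [x y]; rewrite /mlin /=; congr pair.
- by transitivity ((a * a + c * c) * x + (a * b + c * d) * y); [ring | rewrite h4 h6; ring].
- by transitivity ((a * b + c * d) * x + (b * b + d * d) * y); [ring | rewrite h5 h6; ring].
Qed.

Lemma mappK m : orthogonal m -> cancel (mapp m) (mapp (minv m)).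
Proof.
move=> /mlinK mK p; rewrite -{2}(mK p); case: m {mK} => a b c d t1 t2.
by rewrite /mapp /mlin /=; congr pair; ring.
Qed.

Lemma mappKV m : orthogonal m -> cancel (mapp (minv m)) (mapp m).
Proof. by move=> mo; rewrite -{2}(minvK mo); apply/mappK/orthogonal_minv. Qed.

Lemma dot_mlin m n p : orthogonal m -> dot (mlin m n) (mlin m p) = dot n p.
Proof.
case/orthogonal_cols; case: m => a b c d t1 t2 /= h4 h5 h6; rewrite /dot /mlin /=.
transitivity ((a * a + c * c) * n.1 * p.1 + (a * b + c * d) * (n.1 * p.2 + n.2 * p.1)
  + (b * b + d * d) * n.2 * p.2); first ring.
by rewrite h4 h5 h6; ring.
Qed.

Lemma dot_mlin_mapp m n p : orthogonal m ->
  dot (mlin m n) (mapp m p) = dot n p + dot (mlin m n) (mtrans m).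
Proof. by move=> mo; rewrite -(dot_mlin n p mo) /dot /mapp /=; ring. Qed.

Lemma d2_mapp m p q : orthogonal m -> d2 (mapp m p) (mapp m q) = d2 p q.
Proof.
move=> mo; have := dot_mlin (p.1 - q.1, p.2 - q.2) (p.1 - q.1, p.2 - q.2) mo.
by rewrite /d2 /dot /mapp /mlin /= !expr2 => <-; ring.
Qed.

Lemma dot_mapp_self m c : orthogonal m -> dot (mapp m c) (mapp m c) =
  dot c c + 2 * dot (mlin m c) (mtrans m) + dot (mtrans m) (mtrans m).
Proof. by move=> mo; rewrite -(dot_mlin c c mo) /dot /mapp /=; ring. Qed.

Definition mapd (m : motion) d : gdisk R :=
  match d with
  | GDisk c r => GDisk (mapp m c) r
  | GCoDisk c r => GCoDisk (mapp m c) r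
  | GHalf n h => GHalf (mlin m n) (h + dot (mlin m n) (mtrans m))
  end.

Definition mapD (m : motion) D : config R := Config (mapd m \o circ D) (posor D).

Lemma mapdK m : orthogonal m -> cancel (mapd m) (mapd (minv m)).
Proof.
move=> mo [c r|c r|n h] /=; rewrite ?mappK ?mlinK //; congr GHalf.
by case: m mo => a b c d t1 t2 _; rewrite /dot /mlin /mtrans /minv /=; ring.
Qed.

Lemma mapdKV m : orthogonal m -> cancel (mapd (minv m)) (mapd m).
Proof. by move=> mo; rewrite -{2}(minvK mo); apply/mapdK/orthogonal_minv. Qed.

Lemma mapDK m : orthogonal m -> cancel (mapD m) (mapD (minv m)).
Proof.
move=> mo [C s]; rewrite /mapD /=; congr Config.
by apply: functional_extensionality => i /=; rewrite mapdK.
Qed.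

Lemma gdisk_wf_map m d : orthogonal m -> gdisk_wf d -> gdisk_wf (mapd m d).
Proof. by move=> mo; case: d => [c r|c r|n h] //=; rewrite dot_mlin. Qed.

Lemma circle_map m d z : orthogonal m ->
  circle (mapd m d) (xmap (mapp m) z) <-> circle d z.
Proof.
move=> mo; case: d => [c r|c r|n h]; case: z => [p|] //=; rewrite ?d2_mapp //.
by rewrite dot_mlin_mapp //; split=> [/addIr|->].
Qed.

Lemma interior_map m d z : orthogonal m ->
  interior (mapd m d) (xmap (mapp m) z) <-> interior d z.
Proof.
move=> mo; case: d => [c r|c r|n h]; case: z => [p|] //=; rewrite ?d2_mapp //.
by rewrite dot_mlin_mapp // ltrD2r.
Qed.

Lemma xmapKV m : orthogonal m -> cancel (xmap (mapp (minv m))) (xmap (mapp m)).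
Proof. by move=> mo [p|] //=; rewrite mappKV. Qed.

Lemma descartes_map m D : orthogonal m -> is_descartes D -> is_descartes (mapD m D).
Proof.
move=> mo [wf tan]; split=> [i|i j ne] /=; first exact: gdisk_wf_map.
have [[z [ci [cj uniq]]] dis] := tan i j ne; split.
  exists (xmap (mapp m) z); rewrite !circle_map //; do 2 split=> //; move=> w.
  rewrite -(xmapKV mo w) !circle_map // => wi wj.
  by rewrite (uniq _ wi wj).
move=> w; rewrite -(xmapKV mo w) !interior_map //; exact: dis.
Qed.

Lemma circle_mapd m d : orthogonal m ->
  circle (mapd m d) = image_set (mapp m) (circle d).
Proof.
move=> mo; apply: functional_extensionality => w; apply: propositional_extensionality.
split=> [cw|[z [cz ->]]]; last exact/circle_map.
by exists (xmap (mapp (minv m)) w); rewrite -(circle_map _ _ mo) xmapKV.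
Qed.

(* Under [p |-> A p + t] a row [(bbar, b, b c)] becomes [(bbar', b, A (b c) + b t)]
   with [bbar' = b |A c + t|^2 - 1/b = bbar + 2 (A (b c)) . t + b |t|^2]; a
   half-plane row [(2 h, 0, n)] transforms by the same formula. *)
Definition motion_mx (m : motion) : 'M[R]_4 := mx4
  [:: [:: 1; 0; 0; 0];
      [:: mt1 m ^+ 2 + mt2 m ^+ 2; 1; mt1 m; mt2 m];
      [:: 2 * (ma m * mt1 m + mc m * mt2 m); 0; ma m; mc m];
      [:: 2 * (mb m * mt1 m + md m * mt2 m); 0; mb m; md m]].

Lemma acc_map m D : orthogonal m -> (forall i, gdisk_wf (circ D i)) ->
  acc (mapD m D) = acc D *m motion_mx m.
Proof.
move=> mo wf; apply/matrixP => i k; rewrite !mxE sum4 !mxE /=.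
move: (wf i); case: (circ D i) => [c r|c r|n h] /= wr; ord4_cases k;
  rewrite /= ?dot_mapp_self // /dot /mlin /mtrans /=; field; rewrite ?gt_eqF //.
Qed.

Lemma in_orbit_map m D E : orthogonal m -> is_descartes D -> Defs.in_orbit D E ->
  Defs.in_orbit (mapD m D) (mapD m E).
Proof.
move=> mo hD [hE [g [hg gE]]]; split; first exact: descartes_map.
exists g; split=> //.
by rewrite (acc_map mo (proj1 hE)) (acc_map mo (proj1 hD)) gE mulmxA.
Qed.

Lemma in_orbit_mapV m D E : orthogonal m -> is_descartes D ->
  Defs.in_orbit (mapD m D) E -> Defs.in_orbit D (mapD (minv m) E).
Proof.
move=> mo hD /(in_orbit_map (orthogonal_minv mo) (descartes_map mo hD)).
by rewrite mapDK.
Qed.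

Lemma super_packing_map m D C : orthogonal m -> is_descartes D ->
  (exists C0, super_packing D C0 /\ C = image_set (mapp m) C0) <->
  super_packing (mapD m D) C.
Proof.
move=> mo hD; split.
  case=> _ [[E [hE [i ->]]] ->].
  by exists (mapD m E); split; [exact: in_orbit_map | exists i; rewrite /= circle_mapd].
case=> E [hE [i ->]].
exists (circle (circ (mapD (minv m) E) i)); split.
  by exists (mapD (minv m) E); split; [exact: in_orbit_mapV | exists i].
by rewrite /= -circle_mapd // mapdKV.
Qed.
End Motions.

(** * From integral to strongly integral *)

Lemma lift0_ord3P (k : 'I_3) : [\/ lift ord0 k = i1, lift ord0 k = i2 | lift ord0 k = i3].
Proof.
by case: k => [[|[|[|m]]] hm] //; [constructor 1|constructor 2|constructor 3]; apply: val_inj.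
Qed.

Section StrongIntegrality.
Variable R : realType.
Implicit Types (D : config R) (m : motion R).

Definition ivecR (u : ivec) : 'I_4 -> R :=
  fun i => (nth 0 [:: iv0 u; iv1 u; iv2 u; iv3 u] i)%:~R.

Lemma is_int_ivecR u i : is_int (ivecR u i).
Proof. by exists (nth 0 [:: iv0 u; iv1 u; iv2 u; iv3 u] i). Qed.

Lemma qD_ivecR u v : qD (ivecR u) (ivecR v) = (qform u v)%:~R / 2.
Proof.
case: u v => [a0 a1 a2 a3] [b0 b1 b2 b3].
by rewrite qDE /ivecR /qform /idot /isum /= !(intrD, intrM, intrB); field.
Qed.

Lemma curvE D i : curv D i = acc D i i1.
Proof. by rewrite /curv; congr (acc D i); apply: val_inj. Qed.

Lemma int_curvatures_ivec D : (forall i, is_int (curv D i)) ->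
  exists B, (acc D)^~ i1 = ivecR B.
Proof.
move=> hint; have e := curvE D.
have [[z0 h0] [z1 h1]] := (hint i0, hint i1); have [[z2 h2] [z3 h3]] := (hint i2, hint i3).
exists (IVec z0 z1 z2 z3); apply: functional_extensionality => i.
by ord4_cases i; rewrite -e.
Qed.

Lemma curv_map m D i : curv (mapD m D) i = curv D i.
Proof. by rewrite /curv !mxE /=; case: (circ D i). Qed.

Lemma qD_lin3 u x y z (p q s : R) :
  qD u (fun i => p * x i + q * y i + s * z i) = p * qD u x + q * qD u y + s * qD u z.
Proof. by rewrite !qDE; ring. Qed.

(* Expanding [U] and [V] in the columns of [acc D], the coefficients on the two
   centre columns are the rows of an orthogonal matrix, because [Q_D] is [2 I]
   on those columns, and the coefficients on the curvature column form the
   translation. *)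
Lemma frame_motion D B U V : is_descartes D -> (acc D)^~ i1 = ivecR B ->
  [/\ qform B U = 0, qform B V = 0, qform U U = 4, qform V V = 4 & qform U V = 0] ->
  exists m, orthogonal m /\
    (acc (mapD m D))^~ i2 = ivecR U /\ (acc (mapD m D))^~ i3 = ivecR V.
Proof.
move=> hD colB [BU BV UU VV UV]; set W := acc D.
pose coef k (X : ivec) := qD (W^~ k) (ivecR X) / 2.
have qDB X : qform B X = 0 -> qD (W^~ i1) (ivecR X) = 0.
  by move=> BX; rewrite colB qD_ivecR BX mul0r.
have expand X : qform B X = 0 -> exists t,
    ivecR X = fun i => t * W i i1 + coef i2 X * W i i2 + coef i3 X * W i i3.
  move=> BX; exists (- qD (W^~ i0) (ivecR X) / 4); apply: functional_extensionality => i.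
  by rewrite [LHS](acc_col_expansion _ hD) -/W qDB // /coef; ring.
have gram X Y : qform B X = 0 -> qform B Y = 0 ->
    (qform X Y)%:~R / 2 = 2 * (coef i2 X * coef i2 Y + coef i3 X * coef i3 Y) :> R.
  move=> BX /expand[t eY]; rewrite -qD_ivecR eY qD_lin3 qDC qDB // [qD _ (W^~ i2)]qDC.
  by rewrite [qD _ (W^~ i3)]qDC /coef; field.
have [tU eU] := expand U BU; have [tV eV] := expand V BV.
set m := Motion (coef i2 U) (coef i3 U) (coef i2 V) (coef i3 V) tU tV.
have mo : orthogonal m.
  move: (gram U U BU BU) (gram V V BV BV) (gram U V BU BV).
  by rewrite UU VV UV /orthogonal /= => h1 h2 h3; split; lra.
exists m; split=> //; rewrite (acc_map mo (proj1 hD)) -/W eU eV.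
by split; apply: functional_extensionality => i; rewrite !mxE sum4 !mxE /=; ring.
Qed.

Lemma integral_descartes_motion D : is_descartes D -> (forall i, is_int (curv D i)) ->
  exists m, orthogonal m /\ forall i k, is_int (ccmat (mapD m D) i k).
Proof.
move=> hD /int_curvatures_ivec[B colB].
have isoB : qform B B = 0.
  have := qD_acc_cols i1 i1 hD; rewrite colB qD_ivecR mxE /= => /eqP.
  by rewrite mulf_eq0 invr_eq0 pnatr_eq0 orbF intr_eq0 => /eqP.
have [U [V frame]] := has_frame_isotropic isoB.
have [m [mo [colU colV]]] := frame_motion hD colB frame.
exists m; split=> // i k; rewrite mxE.
case: (lift0_ord3P k) => ->.
- by rewrite -curvE curv_map curvE -[acc D i i1]/((acc D)^~ i1 i) colB; apply: is_int_ivecR.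
- by rewrite -[acc _ i i2]/((acc _)^~ i2 i) colU; apply: is_int_ivecR.
- by rewrite -[acc _ i i3]/((acc _)^~ i3 i) colV; apply: is_int_ivecR.
Qed.
End StrongIntegrality.

Theorem theorem4p3 (R : realType) (D : config R) :
  is_descartes D -> integral_sp D ->
  exists f : pt R -> pt R, euclid_motion f /\
    exists D' : config R, is_descartes D' /\ strongly_integral_sp D' /\
      (forall C : xpt R -> Prop,
         (exists C0, super_packing D C0 /\ C = image_set f C0) <->
         super_packing D' C).
Proof.
move=> hD [D1 [hO1 hint]].
have [m [mo hm]] := integral_descartes_motion (proj1 hO1) hint.
exists (mapp m); split; first by move=> p q; apply: d2_mapp.
exists (mapD m D); split; first exact: descartes_map.
split; last by move=> C; apply: super_packing_map.
by exists (mapD m D1); split; [exact: in_orbit_map | exact: hm].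
Qed.
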